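(* Let $q\in AC_{loc}(\mathbb{R}_+)$ be complex-valued and suppose there are constants $C_1,C_2>0$ such that $|q(x)|>C_1$ and $|q'(x)/q^{3/2}(x)|<C_2$ for a.e. $x\ge0$. Then every solution $y$ of $-y''+q(x)y=0$ on $\mathbb{R}_+$ with $y\in L_2(\mathbb{R}_+)$ satisfies $y'/|q|^{1/2}\in L_2(\mathbb{R}_+)$.
   Context: $\mathbb{R}_+=[0,+\infty)$; $AC_{loc}$ denotes locally absolutely continuous functions; $|q^{3/2}|=|q|^{3/2}$. *)

From HB Require Import structures.
From mathcomp Require Import all_boot all_order all_algebra.
From mathcomp Require Import all_classical all_reals all_analysis.
From mathcomp Require Import complex.
Set Implicit Arguments. Unset Strict Implicit. Unset Printing Implicit Defensive.
Import Order.TTheory GRing.Theory Num.Theory.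
Local Open Scope ring_scope.
Local Open Scope classical_set_scope.

Definition cabs {R : realType} (z : R[i]) : R :=
  Num.sqrt (complex.Re z ^+ 2 + complex.Im z ^+ 2).

Definition abs_cont_on {R : realType} (a b : R) (f : R -> R) : Prop :=
  forall e : R, 0 < e -> exists2 d : R, 0 < d &
    forall (n : nat) (s t : 'I_n -> R),
      (forall k, a <= s k /\ s k <= t k /\ t k <= b) ->
      (forall i j, i != j -> t i <= s j \/ t j <= s i) ->
      \sum_(k < n) (t k - s k) < d ->
      \sum_(k < n) `|f (t k) - f (s k)| < e.

Definition AC_loc_Rplus {R : realType} (f : R -> R[i]) : Prop :=
  forall b : R, 0 < b ->
    abs_cont_on 0 b (fun x => complex.Re (f x)) /\ abs_cont_on 0 b (fun x => complex.Im (f x)).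

Definition cderiv_at {R : realType} (f : R -> R[i]) (x : R) (df : R[i]) : Prop :=
  is_derive x (1:R) (fun t => complex.Re (f t)) (complex.Re df) /\
  is_derive x (1:R) (fun t => complex.Im (f t)) (complex.Im df).

Definition L2_Rplus {R : realType} (f : R -> R[i]) : Prop :=
  measurable_fun `[(0%R:R), +oo[ (fun x => complex.Re (f x)) /\
  measurable_fun `[(0%R:R), +oo[ (fun x => complex.Im (f x)) /\
  (\int[@lebesgue_measure R]_(x in `[(0%R:R), +oo[) ((cabs (f x)) ^+ 2)%:E < +oo)%E.

From HB Require Import structures.
From mathcomp Require Import all_boot all_order all_algebra.
From mathcomp Require Import all_classical all_reals all_analysis.
From mathcomp Require Import complex.
From mathcomp Require Import ring lra measurable_realfun.
Import Order.TTheory GRing.Theory Num.Theory.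
Import numFieldNormedType.Exports.
Local Open Scope ring_scope.
Local Open Scope classical_set_scope.

(* Write p = y' and R = Re (p * conj y), so that (|y|^2)' = 2 R and, as
   p' = q y, (R / |q|)' = (|p|^2 + Re q |y|^2) / |q| - R |q|' / |q|^2.
   Since |q|' <= |q'| <= C2 |q|^(3/2), Cauchy-Schwarz and AM-GM show that
     Psi x = 3/4 \int_0^x |p|^2 / |q| - R x / |q x| - (C2^2 + 1) \int_0^x |y|^2
   has a nonpositive derivative almost everywhere; Psi is locally absolutely
   continuous, hence nonincreasing.  If \int_0^oo |p|^2 / |q| were infinite,
   R / |q| would eventually exceed 1, so (|y|^2)' = 2 R >= 2 C1 eventually
   and y could not be square integrable.  (The bound |q| > C1, assumed a.e.,
   holds everywhere by continuity.) *)

Set Implicit Arguments. Unset Strict Implicit. Unset Printing Implicit Defensive.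

Section abs_cont_on.
Context {R : realType}.
Implicit Types (a b K : R) (f g : R -> R).

Lemma abs_cont_on_ucont a b f : abs_cont_on a b f ->
  forall e : R, 0 < e -> exists2 d : R, 0 < d &
   forall x t, a <= x <= b -> a <= t <= b -> `|t - x| < d -> `|f t - f x| < e.
Proof.
move=> acf e e0; have [d d0 acd] := acf e e0.
exists d => // x t /andP[ax xb] /andP[aT tb] txd.
have := acd 1%N (fun=> Num.min t x) (fun=> Num.max t x); rewrite !big_ord1.
have [tx|xt] := leP t x.
- rewrite distrC; apply=> [_||]; [lra | by move=> i j; rewrite !ord1 |].
  by rewrite distrC ger0_norm ?subr_ge0 in txd.
- apply=> [_||]; [lra | by move=> i j; rewrite !ord1 |].
  by rewrite ger0_norm ?subr_ge0 ?(ltW xt) in txd.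
Qed.

Lemma abs_cont_on_dominated a b f g F K : 0 < K ->
  abs_cont_on a b f -> abs_cont_on a b g ->
  (forall s t, a <= s <= b -> a <= t <= b ->
     `|F t - F s| <= K * (`|f t - f s| + `|g t - g s|)) ->
  abs_cont_on a b F.
Proof.
move=> K0 acf acg domF e e0.
have c0 : 0 < e / (2 * K) by rewrite divr_gt0 // mulr_gt0.
have [df df0 acdf] := acf _ c0; have [dg dg0 acdg] := acg _ c0.
exists (Num.min df dg); first by rewrite lt_min df0.
move=> n s t st disj sum_lt.
have sf : \sum_(k < n) `|f (t k) - f (s k)| < e / (2 * K).
  by apply: acdf => //; apply: lt_le_trans sum_lt _; rewrite ge_min lexx.
have sg : \sum_(k < n) `|g (t k) - g (s k)| < e / (2 * K).
  by apply: acdg => //; apply: lt_le_trans sum_lt _; rewrite ge_min lexx orbT.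
have domk (k : 'I_n) : true ->
    `|F (t k) - F (s k)| <= K * (`|f (t k) - f (s k)| + `|g (t k) - g (s k)|).
  by move=> _; have [? [? ?]] := st k; apply: domF; apply/andP; split; lra.
apply: le_lt_trans (ler_sum _ domk) _.
rewrite -mulr_sumr big_split /=.
have eK : K * (e / (2 * K)) * 2 = e by field; rewrite gt_eqF.
nra.
Qed.

Lemma abs_cont_on_id a b : abs_cont_on a b id.
Proof.
move=> e e0; exists e => // n s t st _; apply: le_lt_trans; apply: ler_sum => k _.
by have [_ [? _]] := st k; rewrite ger0_norm ?subr_ge0.
Qed.

Lemma abs_cont_on_lipschitz a b F K : 0 < K ->
  (forall s t, a <= s <= b -> a <= t <= b -> `|F t - F s| <= K * `|t - s|) ->
  abs_cont_on a b F.
Proof.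
move=> K0 lipF; apply: (abs_cont_on_dominated K0 (abs_cont_on_id a b) (abs_cont_on_id a b)).
move=> s t sab tab; apply: le_trans (lipF s t sab tab) _.
by rewrite ler_pM2l //= lerDl.
Qed.

Lemma abs_cont_on_comp a b f (phi : R -> R) (S : set R) K : 0 < K ->
  abs_cont_on a b f -> (forall x, a <= x <= b -> S (f x)) ->
  (forall u v, S u -> S v -> `|phi u - phi v| <= K * `|u - v|) ->
  abs_cont_on a b (phi \o f).
Proof.
move=> K0 acf fS lipphi; apply: (abs_cont_on_dominated K0 acf acf) => s t sab tab.
by apply: le_trans (lipphi _ _ (fS _ tab) (fS _ sab)) _; rewrite ler_pM2l // lerDl.
Qed.

Lemma abs_cont_onD a b f g : abs_cont_on a b f -> abs_cont_on a b g ->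
  abs_cont_on a b (f + g).
Proof.
move=> acf acg; apply: (abs_cont_on_dominated ltr01 acf acg) => s t _ _.
by rewrite /= mul1r opprD addrACA; apply: ler_normD.
Qed.

Lemma abs_cont_onZ a b f (c : R) : abs_cont_on a b f -> abs_cont_on a b (c \*: f).
Proof.
move=> acf; have c1 : 0 < `|c| + 1 by rewrite ltr_wpDl.
apply: (abs_cont_on_dominated c1 acf acf) => s t _ _.
rewrite /= -mulrBr normrM; have := normr_ge0 (f t - f s); nra.
Qed.

Lemma abs_cont_onB a b f g : abs_cont_on a b f -> abs_cont_on a b g ->
  abs_cont_on a b (f - g).
Proof.
move=> acf acg; apply: (abs_cont_on_dominated ltr01 acf acg) => s t _ _.
rewrite /= mul1r !fctE (_ : f t - g t - _ = (f t - f s) - (g t - g s)); last by ring.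
exact: ler_normB.
Qed.

Lemma abs_cont_on_bounded a b f : abs_cont_on a b f ->
  exists M : R, forall x, a <= x <= b -> `|f x| <= M.
Proof.
move=> acf; have [d d0 ucf] := abs_cont_on_ucont acf ltr01.
pose n := Num.bound ((b - a) / (d / 2)).
have steps (k : nat) x : a <= x <= b -> x - a <= k%:R * (d / 2) -> `|f x - f a| <= k%:R.
  elim: k x => [|k IHk] x /andP[ax xb].
    by rewrite mul0r => xa; rewrite (_ : x = a) ?subrr ?normr0 //; lra.
  pose x' := Num.max a (x - d / 2).
  have ax' : a <= x' by rewrite /x' le_max lexx.
  have x'x : x' <= x by rewrite /x' ge_max ax /=; lra.
  rewrite -natr1 mulrDl mul1r => xk.
  have x'k : x' - a <= k%:R * (d / 2).
    rewrite /x'; have [?|?] := leP a (x - d / 2); first lra.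
    by rewrite subrr mulr_ge0 //; lra.
  have := IHk x' ltac:(apply/andP; split; lra) x'k.
  have : `|f x - f x'| < 1.
    apply: ucf; [apply/andP; split; lra | apply/andP; split; lra |].
    rewrite ger0_norm ?subr_ge0 // /x'.
    by have [?|?] := leP a (x - d / 2); lra.
  have := ler_normD (f x - f x') (f x' - f a); rewrite addrA subrK; lra.
exists (n%:R + `|f a|) => x /andP[ax xb].
have xn : x - a <= n%:R * (d / 2).
  have := archi_boundP (x := (b - a) / (d / 2)) ltac:(rewrite divr_ge0 //; lra).
  by rewrite -/n ltr_pdivrMr 1?divr_gt0 //; lra.
have := steps n x ltac:(apply/andP; split => //) xn.
have := ler_normD (f x - f a) (f a); rewrite subrK; lra.
Qed.

Lemma abs_cont_onM a b f g : abs_cont_on a b f -> abs_cont_on a b g ->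
  abs_cont_on a b (f * g).
Proof.
move=> acf acg; have [Mf bf] := abs_cont_on_bounded acf.
have [Mg bg] := abs_cont_on_bounded acg.
have K0 : 0 < `|Mf| + `|Mg| + 1 by rewrite ltr_wpDl // addr_ge0.
apply: (abs_cont_on_dominated K0 acf acg) => s t sab tab /=.
rewrite (_ : f t * g t - f s * g s = f t * (g t - g s) + g s * (f t - f s)); last by ring.
apply: le_trans (ler_normD _ _) _; rewrite !normrM.
have := bf t tab; have := bg s sab; have := ler_norm Mf; have := ler_norm Mg.
have := normr_ge0 (f t); have := normr_ge0 (g s).
have := normr_ge0 (g t - g s); have := normr_ge0 (f t - f s); nra.
Qed.

Lemma abs_cont_on_subitv a b a' b' f : a <= a' -> b' <= b ->
  abs_cont_on a b f -> abs_cont_on a' b' f.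
Proof.
move=> aa' b'b acf e e0; have [d d0 acd] := acf e e0.
exists d => // n s t st; apply: acd => k; have [? [? ?]] := st k; split; [lra|split=> //; lra].
Qed.

End abs_cont_on.

Section real_induction.
Context {R : realType}.

Lemma real_induction (a b : R) (P : R -> Prop) : a <= b -> P a ->
  (forall c, a < c <= b -> (forall t, a <= t < c -> P t) -> P c) ->
  (forall c, a <= c < b -> P c ->
     exists2 r : R, 0 < r & forall t, c < t <= Num.min b (c + r) -> P t) ->
  P b.
Proof.
move=> ab Pa Pleft Pright.
pose S := [set x | a <= x <= b /\ forall t, a <= t <= x -> P t].
have Sa : S a.
  split=> [|t /andP[? ?]]; first by rewrite lexx ab.
  by rewrite (_ : t = a) //; lra.
have supS : has_sup S by split; [exists a | exists b => x [/andP[_ ?] _]].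
set c := sup S.
have ac : a <= c by apply: sup_upper_bound supS _ Sa.
have cb : c <= b by apply: ge_sup; [exists a | move=> x [/andP[_ ?] _]].
have Pbelow t : a <= t < c -> P t.
  move=> /andP[aT tc]; have ct : 0 < c - t by rewrite subr_gt0.
  have [x [_ Px] tx] := sup_adherent ct supS.
  by rewrite -/c in tx; apply: Px; rewrite aT /=; lra.
have Pc : P c.
  have [ca|ac'] := eqVneq c a; first by rewrite ca.
  by apply: Pleft Pbelow; rewrite cb andbT lt_neqAle eq_sym ac' ac.
have [cltb|] := ltP c b; last by move=> bc; rewrite (_ : b = c) //; lra.
have [r r0 Pr] := Pright c ltac:(by rewrite ac cltb) Pc.
have Sc' : S (Num.min b (c + r)).
  split=> [|t /andP[aT tc']]; first by rewrite le_min ge_min lexx /= andbT; apply/andP; split; lra.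
  have [tc|ct|->] := ltgtP t c; last exact: Pc.
  - by apply: Pbelow; rewrite aT tc.
  - by apply: Pr; rewrite ct tc'.
have := sup_upper_bound supS Sc'; rewrite -/c ge_min => /orP[]; lra.
Qed.

End real_induction.

Section increments.
Context {R : realType}.
Variables (a : R) (U : set R) (f : R -> R).

Definition incr_sums (x : R) : set R :=
  [set v | exists n (s t : nat -> R),
    [/\ forall k, (k < n)%N -> a <= s k /\ s k <= t k /\ t k <= x,
        forall i j, (i < n)%N -> (j < n)%N -> i != j -> t i <= s j \/ t j <= s i,
        forall k, (k < n)%N -> `]s k, t k] `<=` U &
        v = \sum_(k < n) (f (t k) - f (s k))]].

Lemma incr_sums0 x : incr_sums x 0.
Proof. by exists 0%N, (fun=> 0), (fun=> 0); split=> //; rewrite big_ord0. Qed.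

Lemma incr_sumsS x y : x <= y -> incr_sums x `<=` incr_sums y.
Proof.
move=> xy v [n [s [t [st disj sU ->]]]]; exists n, s, t; split=> // k kn.
by have [? [? ?]] := st k kn; split=> //; split=> //; lra.
Qed.

Lemma incr_sums_rcons x t v : a <= x -> x <= t -> `]x, t] `<=` U ->
  incr_sums x v -> incr_sums t (v + (f t - f x)).
Proof.
move=> ax xt xtU [n [s [t' [st disj sU ->]]]].
have ltn_n k : (k < n.+1)%N -> k != n -> (k < n)%N by rewrite ltnS ltn_neqAle => ? ->.
exists n.+1, (fun k => if k == n then x else s k), (fun k => if k == n then t else t' k).
split.
- move=> k kn; case: eqVneq => [_|/(ltn_n k kn) {}kn]; first lra.
  by have [? [? ?]] := st k kn; split=> //; split=> //; lra.
- move=> i j il jl ij; case: (eqVneq i n) => [ein|/(ltn_n i il) {}il];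
    case: (eqVneq j n) => [ejn|/(ltn_n j jl) {}jl].
  + by rewrite ein ejn eqxx in ij.
  + by have [? [? ?]] := st j jl; right; lra.
  + by have [? [? ?]] := st i il; left; lra.
  + exact: disj.
- by move=> k kn; case: eqVneq => [//|/(ltn_n k kn) {}kn]; exact: sU.
- rewrite big_ord_recr /= eqxx; congr (_ + _); apply: eq_bigr => k _.
  by rewrite ltn_eqF.
Qed.

Section increment_variation.
Variables (b e : R).
Hypothesis incr_sums_lt : forall x v, x <= b -> incr_sums x v -> v < e.

Definition incr_var x := sup (incr_sums x).

Let incr_sums_sup x : x <= b -> has_sup (incr_sums x).
Proof.
by move=> xb; split; [exists 0; exact: incr_sums0 | exists e => v /(incr_sums_lt xb)/ltW].
Qed.

Lemma incr_var_ge0 x : x <= b -> 0 <= incr_var x.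
Proof. by move=> xb; apply: sup_upper_bound (incr_sums_sup xb) _ (incr_sums0 x). Qed.

Lemma incr_var_le x : x <= b -> incr_var x <= e.
Proof.
by move=> xb; apply: ge_sup; [exists 0; exact: incr_sums0 | move=> v /(incr_sums_lt xb)/ltW].
Qed.

Lemma incr_var_le_homo x y : x <= y -> y <= b -> incr_var x <= incr_var y.
Proof.
move=> xy yb; apply: ge_sup; first by exists 0; exact: incr_sums0.
by move=> v /(incr_sumsS xy); apply: sup_upper_bound (incr_sums_sup yb) _.
Qed.

Lemma incr_var_rcons x t : a <= x -> x <= t -> t <= b -> `]x, t] `<=` U ->
  incr_var x + (f t - f x) <= incr_var t.
Proof.
move=> ax xt tb xtU; rewrite -lerBrDr; apply: ge_sup; first by exists 0; exact: incr_sums0.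
move=> v /(incr_sums_rcons ax xt xtU) xtv; rewrite lerBrDr.
exact: sup_upper_bound (incr_sums_sup tb) _ xtv.
Qed.

End increment_variation.
End increments.

Section small_increments.
Context {R : realType}.
Local Notation mu := (@lebesgue_measure R).

Lemma abs_cont_on_incr_sums_lt (a b e : R) f : abs_cont_on a b f -> 0 < e ->
  exists2 d : R, 0 < d & forall U, measurable U -> (mu U < d%:E)%E ->
    forall x v, x <= b -> incr_sums a U f x v -> v < e.
Proof.
move=> acf e0; have [d d0 acd] := acf e e0; exists d => // U mU Ud x v xb.
move=> [n [s [t [st disj sU ->]]]].
have itvU : \big[setU/set0]_(k < n) `]s k, t k] `<=` U.
  by apply: (big_ind (fun X => X `<=` U)) => // [X Y XU YU z [/XU|/YU]|k _]; last exact: sU.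
have itv_disj : trivIset `I_n (fun k => `]s k, t k]%classic).
  move=> i j /= il jl [z []]; rewrite /= !in_itv /= => /andP[? ?] /andP[? ?].
  by apply/eqP; apply: contraT => ij; case: (disj i j il jl ij); lra.
have sum_lt_d : \sum_(k < n) (t k - s k) < d.
  rewrite -lte_fin -sumEFin.
  have -> : (\sum_(k < n) (t k - s k)%:E = \sum_(k < n) mu `]s k, t k])%E.
    apply: eq_bigr => k _; rewrite lebesgue_measure_itv /= lte_fin.
    have [_ [+ _]] := st k (ltn_ord k); rewrite le_eqVlt => /predU1P[->|->].
      by rewrite ltxx subrr.
    by rewrite EFinB.
  have mitv : measurable (\big[setU/set0]_(k < n) `]s k, t k]) by exact: bigsetU_measurable.
  rewrite -(@measure_semi_additive_ord_I _ _ _ mu (fun k => `]s k, t k]%classic) n) //.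
  by apply: le_lt_trans Ud; apply: le_measure; rewrite ?inE.
apply: le_lt_trans (ler_sum _ (fun k _ => ler_norm _)) _.
apply: (acd n (fun k : 'I_n => s k) (fun k : 'I_n => t k)) => //.
- by move=> k; have [? [? ?]] := st k (ltn_ord k); split=> //; split=> //; lra.
- by move=> i j ij; apply: disj.
Qed.

Lemma negligible_open_cover (N : set R) (d : R) : mu.-negligible N -> 0 < d ->
  exists U, [/\ open U, N `<=` U & (mu U < d%:E)%E].
Proof.
move=> [A [mA A0 NA]] d0.
have Afin : (mu A < +oo)%E by rewrite A0 ltry.
have [U [oU AU UA]] := lebesgue_regularity_outer mA Afin d0.
exists U; split=> //; first exact: subset_trans AU.
rewrite (measureDI mu (open_measurable oU) mA) (setIidr AU).
by rewrite [X in (_ + X)%E](_ : _ = 0%E) ?adde0 //; exact: A0.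
Qed.

Lemma negligible_set1 (a : R) : mu.-negligible [set a].
Proof. by apply/negligibleP; [exact: measurable_set1 | exact: lebesgue_measure_set1]. Qed.

Lemma is_derive_right_ub (f : R -> R) (c df e : R) : is_derive c 1 f df -> 0 < e ->
  exists2 r : R, 0 < r & forall h, 0 < h < r -> f (c + h) - f c <= (df + e) * h.
Proof.
move=> [dvf dfE] e0; move/cvgrPdist_lt: dvf => /(_ e e0) /nbhs_ballP [r /= r0 near_c].
exists r => // h /andP[h0 hr].
have hb : ball 0 r h by rewrite /ball /= sub0r normrN gtr0_norm.
have := near_c h hb; rewrite -[lim _]/('D_1 f c) dfE gt_eqF // => /(_ isT).
rewrite distrC => /(le_lt_trans (ler_norm _)).
rewrite /GRing.scale /= mulr1 [c + h]addrC; set Q := h^-1 * _ => Qdf.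
have -> : f (h + c) - f c = h * Q by rewrite /Q mulrA mulfV ?gt_eqF // mul1r.
nra.
Qed.

End small_increments.

Section nonincreasing_ae.
Context {R : realType}.
Local Notation mu := (@lebesgue_measure R).
Variables (a b : R) (f : R -> R) (N : set R).
Hypotheses (ab : a <= b) (acf : abs_cont_on a b f) (nN : mu.-negligible N).
Hypothesis df_le0 : forall x, a < x < b -> ~ N x -> exists2 d : R, d <= 0 & is_derive x 1 f d.

(* Outside an open cover [U] of [N] the right derivative keeps [f] below
   a line of slope [e]; inside [U] the increments of [f] are absorbed by
   [incr_var], which is at most [e] when [U] has small measure. *)
Section fixed_cover.
Variables (e : R) (U : set R).
Hypotheses (e0 : 0 < e) (oU : open U) (NU : N `|` [set a] `<=` U).
Hypothesis incr_lt : forall x v, x <= b -> incr_sums a U f x v -> v < e.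

Let V := incr_var a U f.
Let P x := f x <= f a + e * (x - a) + V x.

Let P_left c : a < c <= b -> (forall t, a <= t < c -> P t) -> P c.
Proof.
move=> /andP[ac cb] Pbelow; rewrite /P leNgt; apply/negP => fc_gt.
have gap : 0 < f c - (f a + e * (c - a) + V c) by rewrite subr_gt0.
have [r r0 ucf] := abs_cont_on_ucont acf gap.
pose t := Num.max a (c - r / 2).
have [at' tc] : a <= t /\ t < c.
  by rewrite /t; have [act|cta] := leP a (c - r / 2); split; lra.
have := Pbelow t ltac:(by rewrite at' tc); rewrite /P.
have := incr_var_le_homo incr_lt (ltW tc) cb; rewrite -/V.
have : `|f c - f t| < f c - (f a + e * (c - a) + V c).
  apply: ucf; first by rewrite at' (le_trans (ltW tc) cb).
    by rewrite (ltW ac) cb.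
  rewrite ger0_norm ?subr_ge0 ?(ltW tc) // /t.
  by have [act|cta] := leP a (c - r / 2); lra.
have := ler_norm (f c - f t); have : e * (t - a) <= e * (c - a) by rewrite ler_pM2l //; lra.
move: e0; lra.
Qed.

Let P_right c : a <= c < b -> P c ->
  exists2 r : R, 0 < r & forall t, c < t <= Num.min b (c + r) -> P t.
Proof.
move=> /andP[ac cb]; rewrite /P => Pc; have [Uc|nUc] := pselect (U c).
  have /nbhs_ballP [r /= r0 ballU] := open_nbhs_nbhs (conj oU Uc).
  exists (r / 2); first by rewrite divr_gt0.
  move=> t /andP[ct]; rewrite le_min => /andP[tb tcr].
  have ctU : `]c, t] `<=` U.
    move=> z; rewrite /= in_itv /= => /andP[cz zt]; apply: ballU.
    by rewrite /ball /= distrC ger0_norm; lra.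
  have := incr_var_rcons incr_lt ac (ltW ct) tb ctU.
  have : e * (c - a) <= e * (t - a) by rewrite ler_pM2l //; lra.
  by rewrite -/V; lra.
have nNc : ~ N c by move=> Nc; apply: nUc; apply: NU; left.
have ac' : a < c by rewrite lt_neqAle ac andbT; apply/eqP => ca; apply: nUc; apply: NU; right.
have [dd dd0 dfc] := df_le0 (x := c) ltac:(by rewrite ac' cb) nNc.
have [r r0 slope] := is_derive_right_ub dfc e0.
exists (r / 2); first by rewrite divr_gt0.
move=> t /andP[ct]; rewrite le_min => /andP[tb tcr].
have := slope (t - c) ltac:(apply/andP; split; lra); rewrite (addrC c) subrK.
have := incr_var_le_homo incr_lt (ltW ct) tb.
have : dd * (t - c) <= 0 by rewrite mulr_le0_ge0 //; lra.
by rewrite -/V; move: e0; nra.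
Qed.

Lemma abs_cont_on_nonincr_cover : f b <= f a + e * (b - a) + e.
Proof.
have := incr_var_le incr_lt (lexx b).
have : P b by apply: real_induction ab _ P_left P_right; rewrite /P subrr mulr0 addr0 lerDl;
  exact (incr_var_ge0 incr_lt ab).
by rewrite /P -/V; lra.
Qed.

End fixed_cover.

Lemma abs_cont_on_nonincr : f b <= f a.
Proof.
apply/ler_addgt0Pr => e e0; have ba1 : 0 < b - a + 1 by move: ab; lra.
have e'0 : 0 < e / (b - a + 1) by rewrite divr_gt0.
have [d d0 incr_lt] := abs_cont_on_incr_sums_lt acf e'0.
have [U [oU NU Ud]] := negligible_open_cover (negligibleU nN (negligible_set1 a)) d0.
have := abs_cont_on_nonincr_cover e'0 oU NU (incr_lt U (open_measurable oU) Ud).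
rewrite -addrA; suff -> : e / (b - a + 1) * (b - a) + e / (b - a + 1) = e by [].
by field; rewrite gt_eqF.
Qed.

End nonincreasing_ae.

Lemma abs_cont_on_slope_ge {R : realType} (a b c : R) (f : R -> R) (N : set R) :
  a <= b -> abs_cont_on a b f -> (@lebesgue_measure R).-negligible N ->
  (forall x, a < x < b -> ~ N x -> exists2 d : R, c <= d & is_derive x 1 f d) ->
  c * (b - a) <= f b - f a.
Proof.
move=> ab acf nN df_ge.
have acg : abs_cont_on a b (c \*: id - f) by apply/abs_cont_onB/acf/abs_cont_onZ/abs_cont_on_id.
suff : c * b - f b <= c * a - f a by rewrite mulrBr; lra.
apply: (abs_cont_on_nonincr ab acg nN) => x xab nNx; have [d cd dfx] := df_ge x xab nNx.
exists (c *: 1 - d); last exact: is_deriveB (is_deriveZ c (is_derive_id x 1)) dfx.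
by rewrite /GRing.scale /= mulr1 subr_le0.
Qed.

Section half_line.
Context {R : realType}.
Local Notation mu := (@lebesgue_measure R).
Implicit Types (f : R -> R) (x : R).

Definition abs_cont_loc f := forall B : R, 0 < B -> abs_cont_on 0 B f.

(* Composing with [clamp0] extends a function given on [[0, +oo[] to a
   function on [R] that is continuous as soon as the original one is
   continuous on [[0, +oo[]. *)
Definition clamp0 x := Num.max x 0.

Lemma clamp0_ge0 x : 0 <= clamp0 x.
Proof. by rewrite /clamp0 le_max lexx orbT. Qed.

Lemma clamp0_id x : 0 <= x -> clamp0 x = x.
Proof. exact: max_l. Qed.

Lemma continuous_clamp0 f : abs_cont_loc f -> continuous (f \o clamp0).
Proof.
move=> acf x; apply/cvgrPdist_lt => e e0.
have [d d0 ucf] := abs_cont_on_ucont (acf (`|x| + 1) (ltr_wpDl (normr_ge0 x) ltr01)) e0.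
apply/nbhs_ballP; exists (Num.min d 1); first by rewrite /= lt_min d0 ltr01.
move=> t; rewrite /ball /= lt_min => /andP[xtd xt1].
have /andP[? ?] : - d < x - t < d by rewrite -ltr_norml.
have /andP[? ?] : - 1 < x - t < 1 by rewrite -ltr_norml.
have := ler_norm x; have := ler_norm (- x); rewrite normrN => ? ?.
apply: (ucf (clamp0 t) (clamp0 x)); rewrite /clamp0 ?ltr_norml.
- by have [?|?] := leP t 0; apply/andP; split; lra.
- by have [?|?] := leP x 0; apply/andP; split; lra.
- by have [?|?] := leP x 0; have [?|?] := leP t 0; apply/andP; split; lra.
Qed.

Lemma continuous_clamp0_sqr2 (f g : R -> R) : abs_cont_loc f -> abs_cont_loc g ->
  continuous (fun x => f (clamp0 x) ^+ 2 + g (clamp0 x) ^+ 2).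
Proof.
move=> acf acg x; have cf := continuous_clamp0 acf; have cg := continuous_clamp0 acg.
exact: cvgD (cvgM (cf x) (cf x)) (cvgM (cg x) (cg x)).
Qed.

Lemma ae_lt_continuous_le (g : R -> R) (c : R) (N : set R) :
  continuous g -> mu.-negligible N ->
  (forall x, 0 <= x -> ~ N x -> c < g x) -> forall x, 0 <= x -> c <= g x.
Proof.
move=> cg nN gc x x0; rewrite leNgt; apply/negP => gxc.
have /cvgrPdist_lt /(_ (c - g x)) := cg x; rewrite subr_gt0 => /(_ gxc).
move=> /nbhs_ballP [d /= d0 near_x].
suff : mu.-negligible `[x, x + d[ .
  move=> /(negligibleP mu (measurable_itv _)) itv0.
  have : mu `[x, x + d[ = 0%E by exact: itv0.
  rewrite lebesgue_measure_itv /= lte_fin ltrDl d0 -EFinD addrAC subrr add0r.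
  by move=> [] /eqP; rewrite gt_eqF.
apply: negligibleS nN => t; rewrite /= in_itv /= => /andP[xt txd].
have [//|nNt] := pselect (N t); have := gc t (le_trans x0 xt) nNt.
have := near_x t; rewrite /ball /= distrC ger0_norm ?subr_ge0 // => /(_ ltac:(lra)).
by rewrite distrC => /(le_lt_trans (ler_norm _)); lra.
Qed.

End half_line.

Section primitive.
Context {R : realType}.
Local Notation mu := (@lebesgue_measure R).
Implicit Types (k : R -> R) (x B : R).

Definition primitive k x := Rintegral mu `[0, x] k.

Lemma continuous_integrable_itv k (a b : R) : continuous k ->
  mu.-integrable `[a, b] (EFin \o k).
Proof.
move=> ck; apply: continuous_compact_integrable; first exact: segment_compact.
exact: continuous_subspaceT.
Qed.

Lemma is_derive_primitive k x : continuous k -> 0 < x -> is_derive x 1 (primitive k) (k x).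
Proof.
move=> ck x0; have [dk <-] := continuous_FTC1_closed (ltr_pwDr ltr01 (lexx x))
  (continuous_integrable_itv 0 (x + 1) ck) x0 (ck x).
by apply: DeriveDef; rewrite ?derive1E.
Qed.

Lemma primitive_mvt k (s t : R) : continuous k -> 0 <= s -> s < t ->
  exists2 c, s < c < t & primitive k t - primitive k s = k c * (t - s).
Proof.
move=> ck s0 st.
have dk x : x \in `]s, t[%R -> is_derive x 1 (primitive k) (k x).
  by rewrite in_itv /= => /andP[sx _]; apply: is_derive_primitive => //; lra.
have st0 : `[s, t] `<=` `[0, t] by move=> x; rewrite /= !in_itv /= => /andP[? ->]; rewrite andbT; lra.
have := parameterized_integral_continuous (ltW (le_lt_trans s0 st)) (continuous_integrable_itv 0 t ck).
move=> /(continuous_subspaceW st0) ck'.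
by have [c] := MVT st dk ck'; rewrite in_itv; exists c.
Qed.

Lemma primitive_le_homo k (s t : R) : continuous k -> (forall x, 0 <= k x) ->
  0 <= s -> s <= t -> primitive k s <= primitive k t.
Proof.
move=> ck k0 s0; rewrite le_eqVlt => /predU1P[->//|st].
rewrite -subr_ge0; have [c _ ->] := primitive_mvt ck s0 st.
by rewrite mulr_ge0 // subr_ge0 ltW.
Qed.

Lemma abs_cont_on_primitive k B : continuous k -> 0 < B -> abs_cont_on 0 B (primitive k).
Proof.
move=> ck B0; have cnk : continuous (fun x => `|k x|) by move=> x; exact: (cvg_norm (ck x)).
have [c _ kmax] := EVT_max (ltW B0) (continuous_subspaceT (A := `[0, B]) cnk).
have k1 : 0 < `|k c| + 1 by rewrite ltr_wpDl.
apply: (abs_cont_on_lipschitz k1) => s t /andP[s0 sB] /andP[t0 tB].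
wlog st : s t s0 sB t0 tB / s <= t.
  move=> wlog_st; have [/wlog_st|/ltW ts] := leP s t; first exact.
  by rewrite distrC (distrC t); apply: wlog_st.
move: st; rewrite le_eqVlt => /predU1P[->|st]; first by rewrite !subrr normr0 mulr0.
have [c' /andP[sc' c't] ->] := primitive_mvt ck s0 st.
rewrite normrM ler_pM2r ?normr_gt0 ?subr_eq0 ?gt_eqF //.
have : `|k c'| <= `|k c| by apply: kmax; rewrite /= in_itv /=; apply/andP; split; lra.
lra.
Qed.

Lemma primitive_ge0 k x : (forall x, 0 <= k x) -> 0 <= primitive k x.
Proof. by move=> k0; apply: Rintegral_ge0 => y _. Qed.

Lemma primitiveEFin k x : continuous k ->
  (primitive k x)%:E = (\int[mu]_(t in `[0%R, x]) (k t)%:E)%E.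
Proof.
move=> ck; rewrite /primitive /Rintegral fineK //.
exact/integrable_fin_num/continuous_integrable_itv.
Qed.

Lemma primitive_le_integral k B : continuous k -> (forall x, 0 <= k x) -> 0 <= B ->
  ((primitive k B)%:E <= \int[mu]_(x in `[0%R, +oo[) (k x)%:E)%E.
Proof.
move=> ck k0 B0; rewrite primitiveEFin //; apply: ge0_subset_integral => //.
- apply/measurable_EFinP; apply: measurable_funS (continuous_measurable_fun ck) => //.
- by move=> x _; rewrite lee_fin.
- by move=> x; rewrite /= !in_itv /= => /andP[-> _].
Qed.

Lemma integral_le_primitive_ub k (M : R) : continuous k -> (forall x, 0 <= k x) ->
  (forall B, 0 < B -> primitive k B <= M) ->
  (\int[mu]_(x in `[0%R, +oo[) (k x)%:E <= M%:E)%E.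
Proof.
move=> ck k0 kM; have kcvg := ge0_cvgn_integral (mu := mu) k0 (continuous_measurable_fun ck).
rewrite -(cvg_lim _ kcvg) //; apply: lime_le; first by apply/cvg_ex; eexists; exact: kcvg.
near=> n; rewrite -primitiveEFin // lee_fin; apply: kM.
by rewrite ltr0n; near: n; exists 1%N.
Unshelve. all: by end_near.
Qed.

End primitive.

Lemma ler_amgm_quarter {R : realFieldType} (X h g c : R) : 0 <= h -> 0 <= g ->
  X ^+ 2 <= c ^+ 2 * h * g -> X <= h / 4 + c ^+ 2 * g.
Proof.
move=> h0 g0 X2; have T0 : 0 <= h / 4 + c ^+ 2 * g.
  have : 0 <= c ^+ 2 * g by rewrite mulr_ge0 ?sqr_ge0.
  lra.
have : c ^+ 2 * h * g <= (h / 4 + c ^+ 2 * g) ^+ 2.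
  by have := sqr_ge0 (h / 4 - c ^+ 2 * g); nra.
move: T0; set T := h / 4 + _ => T0 hT; nra.
Qed.

Lemma sqr_dot2_le {R : realFieldType} (a1 a2 b1 b2 : R) :
  (a1 * b1 + a2 * b2) ^+ 2 <= (a1 ^+ 2 + a2 ^+ 2) * (b1 ^+ 2 + b2 ^+ 2).
Proof. by have := sqr_ge0 (a1 * b2 - a2 * b1); nra. Qed.

Lemma ler_sqrt_sqr {R : rcfType} (c u : R) : 0 <= c -> c ^+ 2 <= u -> c <= Num.sqrt u.
Proof. by move=> c0 cu; rewrite -[leLHS](ger0_norm c0) -sqrtr_sqr ler_sqrt // (le_trans _ cu) ?sqr_ge0. Qed.

Lemma sqrt_le_sqr {R : rcfType} (u v : R) : 0 <= u -> Num.sqrt u <= v -> u <= v ^+ 2.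
Proof. by move=> u0 uv; have := sqr_sqrtr u0; have := sqrtr_ge0 u; nra. Qed.

Lemma sqr_lt_sqrt {R : rcfType} (c u : R) : 0 <= c -> c < Num.sqrt u -> c ^+ 2 < u.
Proof.
move=> c0 cu; have u0 : 0 < u by rewrite -sqrtr_gt0 (le_lt_trans c0).
by rewrite -ltr_sqrt // sqrtr_sqr ger0_norm.
Qed.

Lemma invsqrt_lipschitz {R : rcfType} (c u v : R) : 0 < c -> c ^+ 2 <= u -> c ^+ 2 <= v ->
  `|(Num.sqrt u)^-1 - (Num.sqrt v)^-1| <= (c ^+ 3)^-1 * `|u - v|.
Proof.
move=> c0 cu cv; have u0 : 0 <= u by rewrite (le_trans _ cu) ?sqr_ge0.
have v0 : 0 <= v by rewrite (le_trans _ cv) ?sqr_ge0.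
have := ler_sqrt_sqr (ltW c0) cu; have := ler_sqrt_sqr (ltW c0) cv.
rewrite -[X in _ * `|X - _|](sqr_sqrtr u0) -[X in _ * `|_ - X|](sqr_sqrtr v0).
move: (Num.sqrt u : R) (Num.sqrt v : R) => s t ct cs.
have s0 : 0 < s by lra.
have t0 : 0 < t by lra.
have -> : s^-1 - t^-1 = (t - s) / (s * t) by field; rewrite !gt_eqF.
rewrite subr_sqr !normrM normfV (gtr0_norm (x := s + t)) ?addr_gt0 //.
rewrite (gtr0_norm (x := s * t)) ?mulr_gt0 // distrC mulrCA ler_wpM2l //.
rewrite [leRHS]mulrC ler_pdivlMr ?exprn_gt0 // ler_pdivrMl ?mulr_gt0 //.
have : c ^+ 2 <= s * t by rewrite expr2 ler_pM // ltW.
rewrite exprSr; nra.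
Qed.

(* The derivative of the Lyapunov function of the main proof at a point,
   in real coordinates, with [a = |q|]. *)
Lemma lyapunov_deriv_le0 {R : realFieldType} (a c qr qi dqr dqi yr yi pr pi : R) :
  0 < a -> a ^+ 2 = qr ^+ 2 + qi ^+ 2 -> dqr ^+ 2 + dqi ^+ 2 <= c ^+ 2 * a ^+ 3 ->
  3 / 4 * ((pr ^+ 2 + pi ^+ 2) * a^-1)
  - (a^-1 * (pr ^+ 2 + pi ^+ 2 + qr * (yr ^+ 2 + yi ^+ 2))
     + (pr * yr + pi * yi) * (- a^-1 ^+ 3 * (qr * dqr + qi * dqi)))
  - (c ^+ 2 + 1) * (yr ^+ 2 + yi ^+ 2) <= 0.
Proof.
move=> a0 qa dqa; set P := pr ^+ 2 + pi ^+ 2; set g := yr ^+ 2 + yi ^+ 2.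
set D := qr * dqr + qi * dqi; set Rf := pr * yr + pi * yi; set w := a^-1.
have w0 : 0 < w by rewrite invr_gt0.
have wa : w * a = 1 by rewrite mulVf ?gt_eqF.
have P0 : 0 <= P by rewrite /P addr_ge0 ?sqr_ge0.
have g0 : 0 <= g by rewrite /g addr_ge0 ?sqr_ge0.
have qr_g : - (w * qr) * g <= g.
  have : (w * qr) ^+ 2 <= 1.
    by rewrite -(expr1n _ 2) -wa !exprMn ler_wpM2l ?sqr_ge0 // qa lerDl sqr_ge0.
  by nra.
have cross : w ^+ 3 * D * Rf <= P * w / 4 + c ^+ 2 * g.
  apply: ler_amgm_quarter; rewrite ?mulr_ge0 ?(ltW w0) //.
  have D2 : D ^+ 2 <= a ^+ 2 * (c ^+ 2 * a ^+ 3).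
    by rewrite qa; apply: le_trans (sqr_dot2_le _ _ _ _) _; rewrite ler_wpM2l ?addr_ge0 ?sqr_ge0.
  have Rf2 : Rf ^+ 2 <= P * g by exact: sqr_dot2_le.
  have : D ^+ 2 * Rf ^+ 2 <= a ^+ 2 * (c ^+ 2 * a ^+ 3) * (P * g).
    by rewrite ler_pM ?sqr_ge0.
  have -> : (w ^+ 3 * D * Rf) ^+ 2 = w ^+ 6 * (D ^+ 2 * Rf ^+ 2) by ring.
  have -> : c ^+ 2 * (P * w) * g = w ^+ 6 * (a ^+ 2 * (c ^+ 2 * a ^+ 3) * (P * g)).
    by rewrite -[in LHS](mul1r w) -(expr1n _ 5) -wa; ring.
  by move=> ?; apply: ler_wpM2l => //; rewrite exprn_ge0 // ltW.
have -> : 3 / 4 * (P * w) - (w * (P + qr * g) + Rf * (- w ^+ 3 * D)) - (c ^+ 2 + 1) * g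
  = - (P * w / 4) - (w * qr) * g + w ^+ 3 * D * Rf - (c ^+ 2 + 1) * g by field.
lra.
Qed.

Section solution.
Context {R : realType}.
Local Notation mu := (@lebesgue_measure R).
Variables (qr qi dqr dqi yr yi pr pi : R -> R) (C1 C2 : R) (N : set R).
Hypothesis C1_gt0 : 0 < C1.
Hypotheses (ac_qr : abs_cont_loc qr) (ac_qi : abs_cont_loc qi).
Hypotheses (ac_yr : abs_cont_loc yr) (ac_yi : abs_cont_loc yi).
Hypotheses (ac_pr : abs_cont_loc pr) (ac_pi : abs_cont_loc pi).
Hypothesis nN : mu.-negligible N.
Hypothesis q_ae : forall x : R, 0 <= x -> ~ N x ->
  [/\ C1 < Num.sqrt (qr x ^+ 2 + qi x ^+ 2),
      is_derive x 1 qr (dqr x), is_derive x 1 qi (dqi x) &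
      Num.sqrt (dqr x ^+ 2 + dqi x ^+ 2) <
        C2 * (Num.sqrt (qr x ^+ 2 + qi x ^+ 2) * Num.sqrt (Num.sqrt (qr x ^+ 2 + qi x ^+ 2)))].
Hypothesis y_ae : forall x : R, 0 <= x -> ~ N x ->
  [/\ is_derive x 1 yr (pr x), is_derive x 1 yi (pi x),
      is_derive x 1 pr (qr x * yr x - qi x * yi x) &
      is_derive x 1 pi (qr x * yi x + qi x * yr x)].
Hypothesis y_L2 : (\int[mu]_(x in `[0%R, +oo[) ((yr x ^+ 2 + yi x ^+ 2)%:E) < +oo)%E.

Let qn2 (x : R) := qr x ^+ 2 + qi x ^+ 2.
Let yn2 (x : R) := yr x ^+ 2 + yi x ^+ 2.
Let pn2 (x : R) := pr x ^+ 2 + pi x ^+ 2.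

Let qn2_ge x : 0 <= x -> C1 ^+ 2 <= qn2 x.
Proof.
move=> x0; rewrite /qn2 -(clamp0_id x0).
apply: (ae_lt_continuous_le (continuous_clamp0_sqr2 ac_qr ac_qi) nN) => // t t0 nNt.
by rewrite clamp0_id //; apply: sqr_lt_sqrt (ltW C1_gt0) _; case: (q_ae t0 nNt).
Qed.

Let w (x : R) := (Num.sqrt (qn2 x))^-1.
Let h (x : R) := pn2 (clamp0 x) * w (clamp0 x).
Let g (x : R) := yn2 (clamp0 x).

Let w_gt0 x : 0 <= x -> 0 < w x.
Proof.
move=> x0; rewrite invr_gt0 sqrtr_gt0 (lt_le_trans _ (qn2_ge x0)) //.
by rewrite exprn_gt0.
Qed.

Let continuous_h : continuous h.
Proof.
move=> x; apply: cvgM; first exact: continuous_clamp0_sqr2.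
apply: cvgV; first by rewrite gt_eqF // sqrtr_gt0 (lt_le_trans _ (qn2_ge (clamp0_ge0 x))) ?exprn_gt0.
apply: (continuous_comp (f := qn2 \o clamp0)); first exact: continuous_clamp0_sqr2.
exact: sqrt_continuous.
Qed.

Let h_ge0 x : 0 <= h x.
Proof. by rewrite mulr_ge0 ?addr_ge0 ?sqr_ge0 // ltW // w_gt0 // clamp0_ge0. Qed.

Let continuous_g : continuous g.
Proof. exact: continuous_clamp0_sqr2. Qed.

Let g_ge0 x : 0 <= g x.
Proof. by rewrite addr_ge0 ?sqr_ge0. Qed.

Let L := fine (\int[mu]_(x in `[0%R, +oo[) ((yr x ^+ 2 + yi x ^+ 2)%:E)).

Let primitive_g_le B : 0 <= B -> primitive g B <= L.
Proof.
move=> B0; have L0 : (0 <= \int[mu]_(x in `[0%R, +oo[) ((yr x ^+ 2 + yi x ^+ 2)%:E))%E.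
  by apply: integral_ge0 => x _; rewrite lee_fin addr_ge0 ?sqr_ge0.
have LE : (L%:E = \int[mu]_(x in `[0%R, +oo[) (g x)%:E)%E.
  rewrite /L fineK ?ge0_fin_numE //; apply: eq_integral => x.
  by rewrite inE /= in_itv /= andbT => x0; rewrite /g clamp0_id.
by rewrite -lee_fin LE; exact: primitive_le_integral.
Qed.

Let Rf (x : R) := pr x * yr x + pi x * yi x.

Let is_derive_w x : 0 <= x -> ~ N x ->
  is_derive x 1 w (- w x ^+ 3 * (qr x * dqr x + qi x * dqi x)).
Proof.
move=> x0 nNx; have [_ dqr_x dqi_x _] := q_ae x0 nNx.
have q0 : 0 < qn2 x by rewrite (lt_le_trans _ (qn2_ge x0)) ?exprn_gt0.
have dq := is_deriveD (is_deriveM dqr_x dqr_x) (is_deriveM dqi_x dqi_x).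
have sq0 : Num.sqrt (qn2 x) != 0 by rewrite gt_eqF ?sqrtr_gt0.
have Dw := is_deriveV (f := Num.sqrt \o qn2) sq0 (is_derive1_comp (is_derive1_sqrt q0) dq).
rewrite (_ : - _ * _ = - (Num.sqrt \o qn2) x ^- 2 *: ((2 * Num.sqrt (qn2 x))^-1 *
  (qr x *: dqr x + qr x *: dqr x + (qi x *: dqi x + qi x *: dqi x)))); first exact: Dw.
by rewrite /w /GRing.scale /=; field.
Qed.

Let is_derive_Rf x : 0 <= x -> ~ N x -> is_derive x 1 Rf (pn2 x + qr x * yn2 x).
Proof.
move=> x0 nNx; have [dyr dyi dpr dpi] := y_ae x0 nNx.
have DR := is_deriveD (is_deriveM dpr dyr) (is_deriveM dpi dyi).
rewrite (_ : _ + _ = pr x *: pr x + yr x *: (qr x * yr x - qi x * yi x)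
  + (pi x *: pi x + yi x *: (qr x * yi x + qi x * yr x))); first exact: DR.
by rewrite /pn2 /yn2 /GRing.scale /=; ring.
Qed.

Let Psi := (3 / 4) \*: primitive h - w * Rf - (C2 ^+ 2 + 1) \*: primitive g.

Let abs_cont_loc_w : abs_cont_loc w.
Proof.
move=> B B0; have C3 : 0 < (C1 ^+ 3)^-1 by rewrite invr_gt0 exprn_gt0.
have acq : abs_cont_on 0 B qn2.
  exact: abs_cont_onD (abs_cont_onM (ac_qr B0) (ac_qr B0)) (abs_cont_onM (ac_qi B0) (ac_qi B0)).
apply: (abs_cont_on_comp (phi := fun u => (Num.sqrt u)^-1) (S := [set u | C1 ^+ 2 <= u]) C3 acq).
- by move=> x /andP[x0 _]; apply: qn2_ge.
- by move=> u v; apply: invsqrt_lipschitz.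
Qed.

Let abs_cont_loc_Psi : abs_cont_loc Psi.
Proof.
move=> B B0; have acRf : abs_cont_on 0 B Rf.
  exact: abs_cont_onD (abs_cont_onM (ac_pr B0) (ac_yr B0)) (abs_cont_onM (ac_pi B0) (ac_yi B0)).
apply: abs_cont_onB; first apply: abs_cont_onB.
- exact/abs_cont_onZ/abs_cont_on_primitive.
- exact: abs_cont_onM (abs_cont_loc_w B0) acRf.
- exact/abs_cont_onZ/abs_cont_on_primitive.
Qed.

Let Psi_deriv_le0 x : 0 < x -> ~ N x -> exists2 d : R, d <= 0 & is_derive x 1 Psi d.
Proof.
move=> x0 nNx; have [_ _ _ dq_lt] := q_ae (ltW x0) nNx.
have DPsi := is_deriveB (is_deriveB (is_deriveZ (3 / 4) (is_derive_primitive continuous_h x0))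
  (is_deriveM (is_derive_w (ltW x0) nNx) (is_derive_Rf (ltW x0) nNx)))
  (is_deriveZ (C2 ^+ 2 + 1) (is_derive_primitive continuous_g x0)).
eexists; last exact: DPsi.
rewrite /GRing.scale /= /h /g clamp0_id ?(ltW x0) //.
have q0 : 0 < qn2 x by rewrite (lt_le_trans _ (qn2_ge (ltW x0))) ?exprn_gt0.
apply: (lyapunov_deriv_le0 (a := Num.sqrt (qn2 x))); first by rewrite sqrtr_gt0.
  by rewrite sqr_sqrtr // ltW.
apply: le_trans (sqrt_le_sqr _ (ltW dq_lt)) _; first by rewrite addr_ge0 ?sqr_ge0.
by rewrite !exprMn (sqr_sqrtr (sqrtr_ge0 (qn2 x))) -exprSr.
Qed.

Let Psi_le B : 0 < B -> Psi B <= Psi 0.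
Proof.
move=> B0; apply: (abs_cont_on_nonincr (ltW B0) (abs_cont_loc_Psi B0) nN).
by move=> x /andP[x0 _]; exact: Psi_deriv_le0.
Qed.

Let yn2_slope_ge B X : 0 <= B -> B <= X -> (forall x, B <= x -> C1 <= Rf x) ->
  2 * C1 * (X - B) <= yn2 X.
Proof.
move=> B0 BX Rf_ge; have X1 : 0 < X + 1 by lra.
have acy : abs_cont_on B X yn2.
  apply: (abs_cont_on_subitv (a := 0) (b := X + 1)) => //; first lra.
  exact: abs_cont_onD (abs_cont_onM (ac_yr X1) (ac_yr X1)) (abs_cont_onM (ac_yi X1) (ac_yi X1)).
have yn2B : 0 <= yn2 B by rewrite addr_ge0 ?sqr_ge0.
suff : 2 * C1 * (X - B) <= yn2 X - yn2 B by lra.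
apply: (abs_cont_on_slope_ge BX acy nN) => x /andP[Bx _] nNx.
have [dyr dyi _ _] := y_ae (le_trans B0 (ltW Bx)) nNx.
exists (2 * Rf x); first by rewrite ler_pM2l // Rf_ge // ltW.
rewrite (_ : 2 * _ = yr x *: pr x + yr x *: pr x + (yi x *: pi x + yi x *: pi x)).
  exact: is_deriveD (is_deriveM dyr dyr) (is_deriveM dyi dyi).
by rewrite /Rf /GRing.scale /=; ring.
Qed.

Let primitive_g_slope_ge B X : 0 <= B -> B + 1 <= X -> (forall x, B <= x -> C1 <= Rf x) ->
  2 * C1 * (X - B - 1) <= primitive g X.
Proof.
move=> B0 BX Rf_ge; have X0 : 0 < X by lra.
have acY := abs_cont_on_subitv (a' := B + 1) (b' := X) (ltW _) (lexx X) (abs_cont_on_primitive continuous_g X0).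
have := primitive_ge0 (B + 1) g_ge0.
suff : 2 * C1 * (X - (B + 1)) <= primitive g X - primitive g (B + 1) by lra.
apply: (abs_cont_on_slope_ge BX (acY _) nN) => [|x /andP[Bx _] _]; first lra.
exists (g x); last by apply: is_derive_primitive => //; lra.
rewrite /g clamp0_id; last lra.
have Bx' : B <= x by lra.
have : 2 * C1 <= 2 * C1 * (x - B) by rewrite ler_peMr ?mulr_ge0 ?ltW //; lra.
by have := yn2_slope_ge B0 Bx' Rf_ge; lra.
Qed.

Let Rf_not_ge B : 0 <= B -> ~ (forall x : R, B <= x -> C1 <= Rf x).
Proof.
move=> B0 Rf_ge; have L0 : 0 <= L.
  exact: le_trans (primitive_ge0 0 g_ge0) (primitive_g_le (lexx 0)).
pose X := B + 2 + L / (2 * C1).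
have LX : 0 <= L / (2 * C1) by rewrite divr_ge0 // mulr_ge0 // ltW.
have BX : B + 1 <= X by rewrite /X; lra.
have X0 : 0 <= X by rewrite /X; lra.
have := primitive_g_slope_ge B0 BX Rf_ge; have := primitive_g_le X0; rewrite /X.
have -> : 2 * C1 * (B + 2 + L / (2 * C1) - B - 1) = 2 * C1 + L by field; rewrite gt_eqF.
by move: C1_gt0; lra.
Qed.

Let primitive_h_le (B : R) : 0 < B -> primitive h B <= 4 / 3 * (Psi 0 + (C2 ^+ 2 + 1) * L + 1).
Proof.
move=> B0; rewrite leNgt; apply/negP => hB; apply: (Rf_not_ge (ltW B0)) => x Bx.
have x0 : 0 < x by lra.
have wRf : 1 < w x * Rf x.
  have := primitive_le_homo continuous_h h_ge0 (ltW B0) Bx.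
  have : (C2 ^+ 2 + 1) * primitive g x <= (C2 ^+ 2 + 1) * L.
    by rewrite ler_wpM2l ?addr_ge0 ?sqr_ge0 // primitive_g_le // ltW.
  have PsiE t : Psi t = 3 / 4 * primitive h t - w t * Rf t - (C2 ^+ 2 + 1) * primitive g t.
    by [].
  have := Psi_le x0; rewrite (PsiE x).
  lra.
have a_ge : C1 <= Num.sqrt (qn2 x) by apply: ler_sqrt_sqr (ltW C1_gt0) (qn2_ge (ltW x0)).
have -> : Rf x = Num.sqrt (qn2 x) * (w x * Rf x).
  by rewrite /w mulrA mulfV ?mul1r // gt_eqF // (lt_le_trans C1_gt0).
have := C1_gt0; nra.
Qed.

Lemma integral_sqr_deriv_div_lt_pinfty :
  (\int[mu]_(x in `[0%R, +oo[)
     (((pr x ^+ 2 + pi x ^+ 2) * (Num.sqrt (qr x ^+ 2 + qi x ^+ 2))^-1)%:E) < +oo)%E.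
Proof.
have -> : (\int[mu]_(x in `[0%R, +oo[)
    (((pr x ^+ 2 + pi x ^+ 2) * (Num.sqrt (qr x ^+ 2 + qi x ^+ 2))^-1)%:E) =
    \int[mu]_(x in `[0%R, +oo[) (h x)%:E)%E.
  by apply: eq_integral => x; rewrite inE /= in_itv /= andbT => x0; rewrite /h clamp0_id.
apply: le_lt_trans (ltry (4 / 3 * (Psi 0 + (C2 ^+ 2 + 1) * L + 1))).
exact: integral_le_primitive_ub continuous_h h_ge0 primitive_h_le.
Qed.

Lemma measurable_fun_div_sqrt_sqrt (f : R -> R) : abs_cont_loc f ->
  measurable_fun (`[0%R, +oo[ : set R) (fun x => f x * (Num.sqrt (Num.sqrt (qr x ^+ 2 + qi x ^+ 2)))^-1).
Proof.
move=> acf; pose F x := f (clamp0 x) * (Num.sqrt (Num.sqrt (qn2 (clamp0 x))))^-1.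
apply: (eq_measurable_fun F).
  by move=> x; rewrite inE /= in_itv /= andbT => x0; rewrite /F clamp0_id.
apply: measurable_funS (continuous_measurable_fun _) => // x.
have q0 : 0 < qn2 (clamp0 x) by rewrite (lt_le_trans _ (qn2_ge (clamp0_ge0 x))) ?exprn_gt0.
apply: cvgM; first exact: continuous_clamp0.
apply: cvgV; first by rewrite gt_eqF // !sqrtr_gt0.
apply: (continuous_comp (f := Num.sqrt \o (qn2 \o clamp0))); last exact: sqrt_continuous.
apply: (continuous_comp (f := qn2 \o clamp0)); last exact: sqrt_continuous.
exact: continuous_clamp0_sqr2.
Qed.

End solution.

Section complex_parts.
Context {R : realType}.
Implicit Types (z u : R[i]) (r x : R).

Lemma ReM z u : complex.Re (z * u) = complex.Re z * complex.Re u - complex.Im z * complex.Im u.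
Proof. by case: z u => [a b] [c d]. Qed.

Lemma ImM z u : complex.Im (z * u) = complex.Re z * complex.Im u + complex.Im z * complex.Re u.
Proof. by case: z u => [a b] [c d] /=; rewrite addrC. Qed.

Lemma ReMr z r : complex.Re (z * r%:C%C) = complex.Re z * r.
Proof. by case: z => a b /=; rewrite mulr0 subr0. Qed.

Lemma ImMr z r : complex.Im (z * r%:C%C) = complex.Im z * r.
Proof. by case: z => a b /=; rewrite mulr0 add0r. Qed.

Lemma cderiv_atM (f : R -> R[i]) x z u : cderiv_at f x (z * u) ->
  is_derive x 1 (fun t => complex.Re (f t))
    (complex.Re z * complex.Re u - complex.Im z * complex.Im u) /\
  is_derive x 1 (fun t => complex.Im (f t))
    (complex.Re z * complex.Im u + complex.Im z * complex.Re u).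
Proof. by rewrite -ReM -ImM. Qed.

Lemma cabs_sqr z : cabs z ^+ 2 = complex.Re z ^+ 2 + complex.Im z ^+ 2.
Proof. by rewrite sqr_sqrtr // addr_ge0 ?sqr_ge0. Qed.

Lemma AC_loc_Rplus_Re (f : R -> R[i]) :
  AC_loc_Rplus f -> abs_cont_loc (fun x => complex.Re (f x)).
Proof. by move=> acf B B0; case: (acf B B0). Qed.

Lemma AC_loc_Rplus_Im (f : R -> R[i]) :
  AC_loc_Rplus f -> abs_cont_loc (fun x => complex.Im (f x)).
Proof. by move=> acf B B0; case: (acf B B0). Qed.

End complex_parts.

Lemma ae_and_negligible {R : realType} (P Q : R -> Prop) :
  {ae @lebesgue_measure R, forall x, P x} -> {ae @lebesgue_measure R, forall x, Q x} ->
  exists2 N, (@lebesgue_measure R).-negligible N & forall x, ~ N x -> P x /\ Q x.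
Proof.
move=> aeP aeQ; exists (~` [set x | P x] `|` ~` [set x | Q x]); first exact: negligibleU.
by move=> x /not_orP[/contrapT Px /contrapT Qx].
Qed.

Unset Implicit Arguments. Set Strict Implicit.

Theorem lemma2 (R : realType) (q dq : R -> R[i]) (C1 C2 : R) :
  AC_loc_Rplus q ->
  0 < C1 -> 0 < C2 ->
  {ae @lebesgue_measure R, forall x, 0 <= x ->
     C1 < cabs (q x) /\ cderiv_at q x (dq x) /\
     cabs (dq x) < C2 * (cabs (q x) * Num.sqrt (cabs (q x)))} ->
  forall y dy : R -> R[i],
    AC_loc_Rplus y -> AC_loc_Rplus dy ->
    {ae @lebesgue_measure R, forall x, 0 <= x ->
       cderiv_at y x (dy x) /\ cderiv_at dy x (q x * y x)} ->
    L2_Rplus y ->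
    L2_Rplus (fun x => dy x * ((Num.sqrt (cabs (q x)))^-1)%:C%C).
Proof.
move=> acq C1_gt0 _ q_ae y dy acy acdy y_ae [_ [_ y_L2]].
have [N nN ae_N] := ae_and_negligible q_ae y_ae.
have [acqr acqi] := (AC_loc_Rplus_Re acq, AC_loc_Rplus_Im acq).
have q_N x x0 nNx := let: conj C1q (conj (conj dqr dqi) dq_lt) := (ae_N x nNx).1 x0 in
  And4 C1q dqr dqi dq_lt.
have y_N x x0 nNx := let: conj (conj dyr dyi) dpy := (ae_N x nNx).2 x0 in
  let: conj dpr dpi := cderiv_atM dpy in And4 dyr dyi dpr dpi.
have y_L2' : (\int[lebesgue_measure]_(x in `[0%R, +oo[)
    ((complex.Re (y x) ^+ 2 + complex.Im (y x) ^+ 2)%:E) < +oo)%E.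
  by under eq_integral do rewrite -cabs_sqr.
have meas (f : R -> R) := measurable_fun_div_sqrt_sqrt C1_gt0 acqr acqi nN q_N (f := f).
split; [|split].
- by apply: eq_measurable_fun (meas _ (AC_loc_Rplus_Re acdy)) => x _; rewrite ReMr.
- by apply: eq_measurable_fun (meas _ (AC_loc_Rplus_Im acdy)) => x _; rewrite ImMr.
- under eq_integral do rewrite cabs_sqr ReMr ImMr !exprMn -mulrDl exprVn sqr_sqrtr ?sqrtr_ge0 //.
  exact: integral_sqr_deriv_div_lt_pinfty C1_gt0 acqr acqi (AC_loc_Rplus_Re acy)
    (AC_loc_Rplus_Im acy) (AC_loc_Rplus_Re acdy) (AC_loc_Rplus_Im acdy) nN q_N y_N y_L2'.
Qed.
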